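(* Assume $s\ge n-r+1$ and let $1\le j_1<\dots<j_{n-r+1}\le s$. Put $$A(j_1,\dots,j_{n-r+1})=\sum_{\sigma\in\mathfrak S_{n+1}}\mathrm{sign}(\sigma)\frac{\partial F_1}{\partial X_{\sigma(0)}}\cdots\frac{\partial F_r}{\partial X_{\sigma(r-1)}}\cdot\frac{\partial G_{j_1}}{\partial X_{\sigma(r)}}\cdots\frac{\partial G_{j_{n-r+1}}}{\partial X_{\sigma(n)}},$$ where $\mathfrak S_{n+1}$ is the group of permutations of $\{0,\dots,n\}$, and $$A'=A(j_1,\dots,j_{n-r+1})\cdot\frac{G_1\cdots G_s}{G_{j_1}\cdots G_{j_{n-r+1}}}\in P^{\mathbf d+\mathbf e-n-1}.$$ Then $A'\mu_i\in J$ and $A'\lambda_j\in J$ for all $1\le i\le r$ and $1\le j\le s$.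
   Context: Let $k$ be a field of characteristic zero, integers $r,s\ge0$ with $r+s\ge1$, $n\ge2$, $d_i,e_j\ge1$, $\mathbf d=\sum_id_i$, $\mathbf e=\sum_je_j$. $P=k[X_0,\dots,X_n]$ with degree-$l$ part $P^l$, and $A=P[\mu_1,\dots,\mu_r,\lambda_1,\dots,\lambda_s]$. Fix $F_i\in P^{d_i}$ ($1\le i\le r$), $G_j\in P^{e_j}$ ($1\le j\le s$) such that the hypersurfaces $\{F_i=0\}$, $\{G_j=0\}$ of $\mathbb P^n$ are smooth and intersect transversally. $J\subset A$ is the ideal generated by $\sum_i\frac{\partial F_i}{\partial X_k}\mu_i+\sum_j\frac{\partial G_j}{\partial X_k}\lambda_j$ ($0\le k\le n$), $F_i$ ($1\le i\le r$), and $G_j\lambda_j$ ($1\le j\le s$). *)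

From HB Require Import structures.
From mathcomp Require Import all_boot all_order all_algebra all_fingroup all_field.
From mathcomp Require Import mpoly.
Set Implicit Arguments. Unset Strict Implicit. Unset Printing Implicit Defensive.
Import GRing.Theory.
Local Open Scope ring_scope.

(* P = k[X_0,...,X_n] is {mpoly k[n.+1]}; A = P[mu_1..mu_r, lambda_1..lambda_s]
   is {mpoly {mpoly k[n.+1]}[r + s]}, with mu_i = 'X_(lshift s i) and
   lambda_j = 'X_(rshift r j); P embeds into A via constants (%:MP). *)

Definition homogOf (k : fieldType) (N : nat) (d : nat) (p : {mpoly k[N]}) : bool :=
  p \is ishomog1 d mdeg.

Definition evalExt (k : fieldType) (L : fieldExtType k) (N : nat)
  (p : {mpoly k[N]}) (x : 'I_N -> L) : L :=
  (map_mpoly (in_alg L) p).@[x].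

(* The hypersurfaces {F_i = 0}, {G_j = 0} of P^n are smooth and intersect
   transversally: at every geometric point x (coordinates in some finite
   extension L of k, x <> 0), the gradients at x of those F_i, G_j vanishing
   at x are linearly independent over L. *)
Definition smooth_transversal (k : fieldType) (n r s : nat)
  (F : 'I_r -> {mpoly k[n.+1]}) (G : 'I_s -> {mpoly k[n.+1]}) : Prop :=
  forall (L : fieldExtType k) (x : 'I_n.+1 -> L), (exists t, x t != 0) ->
  forall (a : 'I_r -> L) (b : 'I_s -> L),
    (forall i, evalExt (F i) x != 0 -> a i = 0) ->
    (forall j, evalExt (G j) x != 0 -> b j = 0) ->
    (forall t : 'I_n.+1,
       \sum_(i < r) a i * evalExt (mderiv t (F i)) x
     + \sum_(j < s) b j * evalExt (mderiv t (G j)) x = 0) ->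
    (forall i, a i = 0) /\ (forall j, b j = 0).

Definition mu_ (k : fieldType) (n r s : nat) (i : 'I_r)
  : {mpoly {mpoly k[n.+1]}[r + s]} := 'X_(lshift s i).
Definition lambda_ (k : fieldType) (n r s : nat) (j : 'I_s)
  : {mpoly {mpoly k[n.+1]}[r + s]} := 'X_(rshift r j).

Definition inJ (k : fieldType) (n r s : nat)
  (F : 'I_r -> {mpoly k[n.+1]}) (G : 'I_s -> {mpoly k[n.+1]})
  (z : {mpoly {mpoly k[n.+1]}[r + s]}) : Prop :=
  exists (a : 'I_n.+1 -> {mpoly {mpoly k[n.+1]}[r + s]})
         (b : 'I_r -> {mpoly {mpoly k[n.+1]}[r + s]})
         (c : 'I_s -> {mpoly {mpoly k[n.+1]}[r + s]}),
    z = \sum_(t < n.+1) a t *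
          (\sum_(i < r) (mderiv t (F i))%:MP * mu_ k n s i
         + \sum_(j < s) (mderiv t (G j))%:MP * lambda_ k n r j)
      + \sum_(i < r) b i * (F i)%:MP
      + \sum_(j < s) c j * ((G j)%:MP * lambda_ k n r j).

Definition jacFactor (k : fieldType) (n r s m : nat)
  (F : 'I_r -> {mpoly k[n.+1]}) (G : 'I_s -> {mpoly k[n.+1]})
  (jj : 'I_m -> 'I_s) (t : 'I_(r + m)) (l : 'I_n.+1) : {mpoly k[n.+1]} :=
  match split t with
  | inl i => mderiv l (F i)
  | inr u => mderiv l (G (jj u))
  end.

Definition Ajac (k : fieldType) (n r s m : nat) (hm : (r + m = n.+1)%N)
  (F : 'I_r -> {mpoly k[n.+1]}) (G : 'I_s -> {mpoly k[n.+1]})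
  (jj : 'I_m -> 'I_s) : {mpoly k[n.+1]} :=
  \sum_(sigma : 'S_n.+1) (-1) ^+ (odd_perm sigma) *
    \prod_(t : 'I_(r + m)) jacFactor F G jj t (sigma (cast_ord hm t)).

(* A' = A * (G_1 ... G_s) / (G_{j_1} ... G_{j_m}) = A * prod_{j not among the j_l} G_j *)
Definition Aprime (k : fieldType) (n r s m : nat) (hm : (r + m = n.+1)%N)
  (F : 'I_r -> {mpoly k[n.+1]}) (G : 'I_s -> {mpoly k[n.+1]})
  (jj : 'I_m -> 'I_s) : {mpoly k[n.+1]} :=
  Ajac hm F G jj * \prod_(j < s | j \notin codom jj) G j.

(* Let V be the column of the n+1 variables mu_1, ..., mu_r, lambda_(j_1), ...,
   lambda_(j_(n-r+1)) and M the Jacobian matrix of F_1, ..., F_r, G_(j_1), ...,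
   G_(j_(n-r+1)), so that A = det M. The generators of J coming from the partial
   derivatives read (M^T V)_t + sum_(j not selected) dG_j/dX_t lambda_j.
   Combining them with the entries of adj M (Cramer's rule) yields
   det M * V_q up to multiples of the lambda_j with j not selected; multiplying
   by the product of the non-selected G_j turns these into multiples of the
   generators G_j lambda_j. The variables lambda_j with j not selected are
   handled directly, since G_j divides A'. *)

From HB Require Import structures.
From mathcomp Require Import all_boot all_order all_algebra all_fingroup all_field.
From mathcomp Require Import mpoly.
From mathcomp Require Import ring.
Set Implicit Arguments. Unset Strict Implicit. Unset Printing Implicit Defensive.
Import Order.TTheory GRing.Theory.
Local Open Scope ring_scope.

Lemma adj_mul_lin_comb (R : comNzRingType) (N : nat) (M : 'M[R]_N)
    (v : 'I_N -> R) (q : 'I_N) :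
  \sum_t \adj M t q * \sum_p M p t * v p = \det M * v q.
Proof.
have adj_col p : \sum_t \adj M t q * M p t = \det M *+ (p == q).
  have /matrixP/(_ p q) := mul_mx_adj M; rewrite !mxE => <-.
  by apply: eq_bigr => t _; rewrite mulrC.
under eq_bigr do rewrite mulr_sumr.
rewrite exchange_big /=.
under eq_bigr do (under eq_bigr do rewrite mulrA; rewrite -mulr_suml adj_col).
rewrite (bigD1 q) //= big1 ?addr0 => [|p /negPf ->]; first by rewrite eqxx.
by rewrite mulr0n mul0r.
Qed.

Lemma big_codom_inj (V : nmodType) (I J : finType) (h : J -> I) (f : I -> V) :
  injective h -> \sum_(i in codom h) f i = \sum_j f (h j).
Proof.
move=> h_inj; rewrite -big_uniq /=; last by rewrite codomE map_inj_uniq ?enum_uniq.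
by rewrite codomE big_map big_enum.
Qed.

Section IdealJ.
Variables (k : fieldType) (n r s : nat).
Variables (F : 'I_r -> {mpoly k[n.+1]}) (G : 'I_s -> {mpoly k[n.+1]}).

Local Notation P := {mpoly k[n.+1]}.
Local Notation A := {mpoly P[r + s]}.
Local Notation mu := (mu_ k n s).
Local Notation lambda := (lambda_ k n r).

Definition jac_form (t : 'I_n.+1) : A :=
  \sum_(i < r) (mderiv t (F i))%:MP * mu i
  + \sum_(j < s) (mderiv t (G j))%:MP * lambda j.

Lemma inJ_comb (S : pred 'I_s) (a : 'I_n.+1 -> A) (c : 'I_s -> A) :
  inJ F G (\sum_t a t * jac_form t + \sum_(j | S j) c j * ((G j)%:MP * lambda j)).
Proof.
exists a, (fun=> 0), (fun j => if S j then c j else 0).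
rewrite [X in _ + X + _]big1 ?addr0 => [|i _]; last by rewrite mul0r.
congr (_ + _); rewrite big_mkcond; apply: eq_bigr => j _.
by case: (S j); rewrite ?mul0r.
Qed.

Variables (m : nat) (hm : (r + m = n.+1)%N) (jj : 'I_m -> 'I_s).
Hypothesis jj_inj : injective jj.

Definition jac_mx : 'M[P]_n.+1 :=
  \matrix_(p, l) jacFactor F G jj (cast_ord (esym hm) p) l.

Definition selected_var (q : 'I_n.+1) : A :=
  match split (cast_ord (esym hm) q) with
  | inl i => mu i
  | inr u => lambda (jj u)
  end.

Definition unselected_prod : P := \prod_(j < s | j \notin codom jj) G j.

Definition unselected_prod_but (j : 'I_s) : P :=
  \prod_(j' < s | (j' \notin codom jj) && (j' != j)) G j'.

Lemma det_jac_mx : \det jac_mx = Ajac hm F G jj.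
Proof.
rewrite /Ajac; apply: eq_bigr => sigma _; congr (_ * _).
rewrite (reindex (cast_ord hm)) /=; last first.
  by exists (cast_ord (esym hm)) => x _; rewrite ?cast_ordK ?cast_ordKV.
by apply: eq_bigr => t _; rewrite mxE cast_ordK.
Qed.

Lemma Aprime_jac_mx : Aprime hm F G jj = \det jac_mx * unselected_prod.
Proof. by rewrite det_jac_mx. Qed.

Lemma selected_var_lshift i : selected_var (cast_ord hm (lshift m i)) = mu i.
Proof. by rewrite /selected_var cast_ordK (unsplitK (inl _ i)). Qed.

Lemma selected_var_rshift u : selected_var (cast_ord hm (rshift r u)) = lambda (jj u).
Proof. by rewrite /selected_var cast_ordK (unsplitK (inr _ u)). Qed.

Lemma unselected_prodE j :
  j \notin codom jj -> unselected_prod = G j * unselected_prod_but j.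
Proof. by move=> j_unsel; rewrite /unselected_prod (bigD1 j). Qed.

Lemma jac_form_split t : jac_form t =
  \sum_p (jac_mx p t)%:MP * selected_var p
  + \sum_(j | j \notin codom jj) (mderiv t (G j))%:MP * lambda j.
Proof.
rewrite /jac_form (bigID (mem (codom jj))) /= big_codom_inj // addrA; congr (_ + _).
rewrite (reindex (cast_ord hm)) /=; last first.
  by exists (cast_ord (esym hm)) => x _; rewrite ?cast_ordK ?cast_ordKV.
rewrite big_split_ord /=; congr (_ + _); apply: eq_bigr => i _.
  by rewrite selected_var_lshift mxE cast_ordK /jacFactor (unsplitK (inl _ i)).
by rewrite selected_var_rshift mxE cast_ordK /jacFactor (unsplitK (inr _ i)).
Qed.

Lemma Aprime_selected_var_inJ q :
  inJ F G ((Aprime hm F G jj)%:MP * selected_var q).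
Proof.
pose C := map_mx (@mpolyC (r + s) P) jac_mx.
pose a t := \adj C t q * unselected_prod%:MP.
pose c j := - ((\sum_t \adj C t q * (mderiv t (G j))%:MP) * (unselected_prod_but j)%:MP).
suff -> : (Aprime hm F G jj)%:MP * selected_var q = \sum_t a t * jac_form t
    + \sum_(j | j \notin codom jj) c j * ((G j)%:MP * lambda j) by apply: inJ_comb.
have cramer : \sum_t a t * \sum_p (jac_mx p t)%:MP * selected_var p
    = (Aprime hm F G jj)%:MP * selected_var q.
  rewrite Aprime_jac_mx rmorphM /= -det_map_mx mulrAC.
  rewrite -(adj_mul_lin_comb C selected_var q) mulr_suml; apply: eq_bigr => t _.
  by rewrite /a [LHS]mulrAC; under [in RHS]eq_bigr do rewrite mxE.
have unselected : \sum_t a t * \sum_(j | j \notin codom jj) (mderiv t (G j))%:MP * lambda j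
    = - \sum_(j | j \notin codom jj) c j * ((G j)%:MP * lambda j).
  rewrite -sumrN; under eq_bigr do rewrite mulr_sumr.
  rewrite exchange_big /=; apply: eq_bigr => j /unselected_prodE unsel_prod.
  rewrite /c mulNr opprK !mulr_suml; apply: eq_bigr => t _.
  by rewrite /a unsel_prod rmorphM /=; ring.
under eq_bigr do rewrite jac_form_split mulrDr.
by rewrite big_split /= cramer unselected addrNK.
Qed.

Lemma Aprime_unselected_lambda_inJ j :
  j \notin codom jj -> inJ F G ((Aprime hm F G jj)%:MP * lambda j).
Proof.
move=> j_unsel.
have -> : (Aprime hm F G jj)%:MP * lambda j
    = (Ajac hm F G jj * unselected_prod_but j)%:MP * ((G j)%:MP * lambda j).
  by rewrite /Aprime -/unselected_prod (unselected_prodE j_unsel) !rmorphM /=; ring.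
have := inJ_comb (pred1 j) (fun=> 0) (fun=> (Ajac hm F G jj * unselected_prod_but j)%:MP).
by rewrite big1 ?add0r ?big_pred1_eq // => t _; rewrite mul0r.
Qed.

End IdealJ.

Theorem mainTheorem9 (k : fieldType) (hchar : [pchar k] =i pred0)
  (n r s : nat) (hrs : (1 <= r + s)%N) (hn : (2 <= n)%N)
  (d : 'I_r -> nat) (e : 'I_s -> nat)
  (hd : forall i, (1 <= d i)%N) (he : forall j, (1 <= e j)%N)
  (F : 'I_r -> {mpoly k[n.+1]}) (G : 'I_s -> {mpoly k[n.+1]})
  (hF : forall i, homogOf (d i) (F i)) (hG : forall j, homogOf (e j) (G j))
  (hST : smooth_transversal F G)
  (m : nat) (hm : (r + m = n.+1)%N) (hs : (m <= s)%N)
  (jj : 'I_m -> 'I_s) (hjj : forall u v : 'I_m, (u < v)%N -> (jj u < jj v)%N) :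
  (forall i : 'I_r, inJ F G (((Aprime hm F G jj)%:MP) * mu_ k n s i)) /\
  (forall j : 'I_s, inJ F G (((Aprime hm F G jj)%:MP) * lambda_ k n r j)).
Proof.
have jj_inj : injective jj by apply/inc_inj/le_mono.
split=> [i|j].
  by rewrite -(selected_var_lshift k hm jj); exact: Aprime_selected_var_inJ.
have [/codomP[u ->]|j_unsel] := boolP (j \in codom jj).
  by rewrite -(selected_var_rshift k hm jj); exact: Aprime_selected_var_inJ.
exact: Aprime_unselected_lambda_inJ.
Qed.
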